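(* Let $\epsilon'$ be obtained from $\epsilon$ by removing the entry $\epsilon_i$ (if $n=4$, assume $\epsilon'$ homogeneous), and let $\mathcal V'=\mathfrak{tr}^\epsilon_{\epsilon'}(\mathcal V)$. Then (1) $\mathcal V'$ is stable under the action of $\mathring{\mathcal U}(\epsilon')$ via $\phi$ and is isomorphic to the natural representation of $\mathring{\mathcal U}(\epsilon')$; (2) $\mathfrak{tr}^\epsilon_{\epsilon'}(\mathcal V^{\otimes\ell})$ is isomorphic to $\mathcal V'^{\otimes\ell}$ as a $\mathring{\mathcal U}(\epsilon')$-module, for every $\ell\ge1$.
   Context: Fix $n\ge 4$, $\epsilon\in\{0,1\}^n$. For $\epsilon^\ast\in\{0,1\}^k$: $\mathbb I=\{1,\dots,k\}$, $\alpha_i=\delta_i-\delta_{i+1}$, $\langle\alpha_i,\delta_j^\vee\rangle$ the coefficient of $\delta_j$ in $\alpha_i$, $I_{\rm even}=\{i:\epsilon^\ast_i=\epsilon^\ast_{i+1}\}$, $I_{\rm odd}$ its complement, $[2]=q+q^{-1}$, $q_j=q$ if $\epsilon^\ast_j=0$, $q_j=-q^{-1}$ if $\epsilon^\ast_j=1$. $\mathring{\mathcal U}(\epsilon^\ast)$ is generated over $\mathbb Q(q)$ by pairwise commuting invertible $\omega_j$ ($j\in\mathbb I$) and $e_i,f_i$ ($1\le i\le k-1$) with relations $\omega_je_i\omega_j^{-1}=q_j^{\langle\alpha_i,\delta_j^\vee\rangle}e_i$, $\omega_jf_i\omega_j^{-1}=q_j^{-\langle\alpha_i,\delta_j^\vee\rangle}f_i$,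 $e_if_j-f_je_i=\delta_{ij}(k_i-k_i^{-1})/(q-q^{-1})$, $k_i=\omega_i\omega_{i+1}^{-1}$, $e_i^2=f_i^2=0$ ($i\in I_{\rm odd}$) and Serre-type relations ($e_ie_j=e_je_i$ for $|i-j|>1$; $e_i^2e_j-(-1)^{\epsilon^\ast_i}[2]e_ie_je_i+e_je_i^2=0$ for $i\in I_{\rm even}$, $|i-j|=1$; $e_ie_{i-1}e_ie_{i+1}-e_ie_{i+1}e_ie_{i-1}+e_{i+1}e_ie_{i-1}e_i-e_{i-1}e_ie_{i+1}e_i+(-1)^{\epsilon^\ast_i}[2]e_ie_{i-1}e_{i+1}e_i=0$ for $i\in I_{\rm odd}$; same for $f$). Tensor products use $\Delta(\omega_j)=\omega_j\otimes\omega_j$, $\Delta(e_i)=e_i\otimes1+k_i^{-1}\otimes e_i$, $\Delta(f_i)=f_i\otimes k_i+1\otimes f_i$. The natural representation $\mathcal V$ of $\mathring{\mathcal U}(\epsilon^\ast)$ is $\bigoplus_{j\in\mathbb I}\mathbb Q(q)v_j$ with $\omega_iv_j=q_i^{\delta_{ij}}v_j$, $e_kv_j=\delta_{k,j-1}v_{j-1}$, $f_kv_j=\delta_{kj}v_{j+1}$. Action via $\phi$: $\mathring{\mathcal U}(\epsilon')$ (generators $\omega'_l$, $1\le l\le n-1$, and $e'_j,f'_j$, $1\le j\le n-2$) acts on $\mathring{\mathcal U}(\epsilon)$-modules through $\omega'_l\mapsto\omega_l$ ($l<i$), $\omega_{l+1}$ ($l\ge i$), $e'_j\mapsto E_j$,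 $f'_j\mapsto F_j$ where: if $2\le i\le n-1$, $E_j=e_j,F_j=f_j$ ($j\le i-2$), $E_{i-1}=e_{i-1}e_i-D\,e_ie_{i-1}$, $F_{i-1}=f_if_{i-1}-D^{-1}f_{i-1}f_i$ with $D=q_{i-1}^{\langle\alpha_i,\delta_{i-1}^\vee\rangle}q_i^{-\langle\alpha_i,\delta_i^\vee\rangle}$, and $E_j=e_{j+1},F_j=f_{j+1}$ ($j\ge i$); if $i=n$, $E_j=e_j,F_j=f_j$; if $i=1$, $E_j=e_{j+1},F_j=f_{j+1}$. Truncation: for a $\mathring{\mathcal U}(\epsilon)$-submodule $V$ of a tensor power of $\mathcal V$, with weight spaces $V_\mu=\{u:\omega_ju=q_j^{\mu_j}u\}$, $\mu=\sum\mu_j\delta_j$, $\mathfrak{tr}^\epsilon_{\epsilon'}(V)=\bigoplus_{\mu:\ \mu_i=0}V_\mu$ (where $i$ is the removed position). *)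

From HB Require Import structures.
From mathcomp Require Import all_boot all_order all_algebra.


Unset Printing Implicit Defensive.
Import Order.TTheory GRing.Theory Num.Theory.
Local Open Scope ring_scope.

(* Paper indices (positions j, generator indices i) are
   1-based naturals; a basis index m : 'I_k stands for v_(m+1). *)

Definition F : fieldType := {fraction {poly rat}}.
Definition q : F := tofrac 'X.

Definition qj (eps : seq bool) (j : nat) : F :=
  if nth false eps j.-1 then - q^-1 else q.

(* <alpha_i, delta_j^vee> = coefficient of delta_j in alpha_i = delta_i - delta_(i+1). *)
Definition pairing (i j : nat) : int := (j == i)%:Z - (j == i.+1)%:Z.

Definition omega1 (eps : seq bool) (j : nat) (m : 'I_(size eps)) : F :=
  if m.+1 == j then qj eps j else 1.
Definition k1 (eps : seq bool) (i : nat) (m : 'I_(size eps)) : F :=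
  omega1 eps i m / omega1 eps i.+1 m.

Definition ordpred {k} (m : 'I_k) : 'I_k :=
  Ordinal (leq_ltn_trans (leq_pred m) (ltn_ord m)).
Definition ordsucc {k} (m : 'I_k) : 'I_k := insubd m m.+1.

(* e_i v_j = delta_{i,j-1} v_(j-1), with j = m+1 *)
Definition e1 (eps : seq bool) (i : nat) (m : 'I_(size eps)) : option 'I_(size eps) :=
  if i == (m.+1 - 1)%N then Some (ordpred m) else None.
(* f_i v_j = delta_{i,j} v_(j+1), with j = m+1 *)
Definition f1 (eps : seq bool) (i : nat) (m : 'I_(size eps)) : option 'I_(size eps) :=
  if i == m.+1 then Some (ordsucc m) else None.

Record act (T : Type) : Type := Act {
  om : nat -> T -> T;
  ea : nat -> T -> T;
  fa : nat -> T -> T }.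
Arguments Act {T}.
Arguments om {T}.
Arguments ea {T}.
Arguments fa {T}.

Definition natv (k : nat) : lmodType F := {ffun 'I_k -> F^o}.
Definition bN {k} (m : 'I_k) : natv k := [ffun m' => (m' == m)%:R].
Definition actN {k} (g : 'I_k -> natv k) (u : natv k) : natv k :=
  \sum_m u m *: g m.
Definition natrep (eps : seq bool) : act (natv (size eps)) :=
  {| om := fun j => actN (fun m => omega1 eps j m *: bN m);
     ea := fun i => actN (fun m => if e1 eps i m is Some m' then bN m' else 0);
     fa := fun i => actN (fun m => if f1 eps i m is Some m' then bN m' else 0) |}.

(* ---- the tensor power V^{(x) l}, basis v_(J 0) (x) ... (x) v_(J (l-1)),
   with the action given by the iterated coproduct
   Delta(omega_j) = omega_j (x) omega_j,
   Delta(e_i) = e_i (x) 1 + k_i^-1 (x) e_i,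
   Delta(f_i) = f_i (x) k_i + 1 (x) f_i. ---- *)
Definition tidx (k l : nat) := {ffun 'I_l -> 'I_k}.
Definition tens (k l : nat) : lmodType F := {ffun tidx k l -> F^o}.
Definition bT {k l} (J : tidx k l) : tens k l := [ffun J' => (J' == J)%:R].
Definition actT {k l} (g : tidx k l -> tens k l) (u : tens k l) : tens k l :=
  \sum_J u J *: g J.
Definition upd {k l} (J : tidx k l) (p : 'I_l) (m : 'I_k) : tidx k l :=
  [ffun r => if r == p then m else J r].

Definition tensrep (eps : seq bool) (l : nat) : act (tens (size eps) l) :=
  {| om := fun j => actT (fun J => (\prod_p omega1 eps j (J p)) *: bT J);
     ea := fun i => actT (fun J => \sum_(p : 'I_l)
              (\prod_(r : 'I_l | (r < p)%N) k1 eps i (J r))^-1 *: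
              (if e1 eps i (J p) is Some m then bT (upd J p m) else 0));
     fa := fun i => actT (fun J => \sum_(p : 'I_l)
              (\prod_(r : 'I_l | (p < r)%N) k1 eps i (J r)) *:
              (if f1 eps i (J p) is Some m then bT (upd J p m) else 0)) |}.

(* ---- the map phi: action of U(eps') (eps' = eps with entry i removed)
   on a U(eps)-module with generator action A ---- *)
Definition Dcoef (eps : seq bool) (i : nat) : F :=
  qj eps i.-1 ^ pairing i i.-1 * qj eps i ^ (- pairing i i).

Definition phiact (eps : seq bool) (i : nat) {T : lmodType F} (A : act T) : act T :=
  let n := size eps in
  let D := Dcoef eps i in
  {| om := fun l => if (l < i)%N then om A l else om A l.+1;
     ea := fun j =>
       if (2 <= i <= n.-1)%N then
         (if (j <= i.-2)%N then ea A j
          else if j == i.-1 then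
            (fun u => ea A i.-1 (ea A i u) - D *: ea A i (ea A i.-1 u))
          else ea A j.+1)
       else if i == n then ea A j else ea A j.+1;
     fa := fun j =>
       if (2 <= i <= n.-1)%N then
         (if (j <= i.-2)%N then fa A j
          else if j == i.-1 then
            (fun u => fa A i (fa A i.-1 u) - D^-1 *: fa A i.-1 (fa A i u))
          else fa A j.+1)
       else if i == n then fa A j else fa A j.+1 |}.

(* u in V_mu, mu = sum_j mu_j delta_j (mu given on basis indices m <-> j = m+1) *)
Definition weightvec (eps : seq bool) {T : lmodType F} (A : act T)
  (mu : {ffun 'I_(size eps) -> int}) (u : T) : Prop :=
  forall m : 'I_(size eps), om A m.+1 u = (qj eps m.+1 ^ mu m) *: u.

Definition inTr (eps : seq bool) (i : nat) {T : lmodType F} (A : act T) (u : T) : Prop :=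
  exists (N : nat) (mu : 'I_N -> {ffun 'I_(size eps) -> int}) (w : 'I_N -> T),
    (forall t, weightvec eps A (mu t) (w t) /\
               forall m : 'I_(size eps), m.+1 = i -> mu t m = 0) /\
    u = \sum_t w t.

Definition stable (k' : nat) {T : lmodType F} (A : act T) (P : T -> Prop) : Prop :=
  forall u, P u ->
    (forall l, (1 <= l <= k')%N -> P (om A l u)) /\
    (forall j, (1 <= j <= k'.-1)%N -> P (ea A j u) /\ P (fa A j u)).

Definition iso_to (k' : nat) {T' T : lmodType F} (A' : act T') (A : act T)
  (P : T -> Prop) : Prop :=
  exists g : {linear T' -> T},
    injective g /\ (forall v, P (g v)) /\ (forall u, P u -> exists v, g v = u) /\
    (forall l, (1 <= l <= k')%N -> forall v, g (om A' l v) = om A l (g v)) /\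
    (forall j, (1 <= j <= k'.-1)%N -> forall v,
        g (ea A' j v) = ea A j (g v) /\ g (fa A' j v) = fa A j (g v)).

From HB Require Import structures.
From mathcomp Require Import all_boot all_order all_algebra zify.
Import GRing.Theory.
Local Open Scope ring_scope.

(* Let s enumerate {1..n} \ {i} increasingly.  The basis tensors of V^(x)l with
   no factor v_i are exactly the images under s of the basis tensors of
   V'^(x)l, and they span the weight spaces with mu_i = 0, because q_i is not a
   root of unity.  So the linear extension of s is injective onto the
   truncation, and it intertwines the two actions: omega'_l, e'_j, f'_j with
   j <> i-1 become omega, e, f with shifted index (the k-factors of the
   coproduct only involve surviving positions), while e_(i-1) and f_i kill the
   truncation, so phi(e'_(i-1)) acts as e_(i-1) e_i, which turns one factor
   v_(i+1) into v_(i-1), with k_i k_(i-1) = k'_(i-1) on the factors to its left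
   (symmetrically for f).  Stability follows from the isomorphism. *)

(** * Linear extensions on function spaces *)

Section LinearPred.
Context {U V : lmodType F} {f : U -> V}.
Hypothesis f_lin : linear f.

Lemma linear_fun0 : f 0 = 0.
Proof.
have := f_lin 1 0 0; rewrite !scale1r addr0 => E.
by apply: (addrI (f 0)); rewrite -E addr0.
Qed.

Lemma linear_funZ a u : f (a *: u) = a *: f u.
Proof. by have := f_lin a u 0; rewrite !addr0 linear_fun0 addr0. Qed.

Lemma linear_fun_sumZ (I : finType) (c : I -> F) (w : I -> U) :
  f (\sum_p c p *: w p) = \sum_p c p *: f (w p).
Proof. by elim/big_rec2: _ => [|p y1 y2 _ <-]; [exact: linear_fun0 | rewrite f_lin]. Qed.

End LinearPred.

Lemma linear_comp {U V W : lmodType F} {f : V -> W} {g : U -> V} :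
  linear f -> linear g -> linear (f \o g).
Proof. by move=> Lf Lg a u v /=; rewrite Lg Lf. Qed.

Lemma linear_subZ {U V : lmodType F} {f g : U -> V} (D : F) :
  linear f -> linear g -> linear (fun u => f u - D *: g u).
Proof.
move=> Lf Lg a u v; rewrite Lf Lg scalerDr scalerA mulrC -scalerA.
by rewrite opprD addrACA scalerBr.
Qed.

Lemma scale_regular (a : F) (b : F^o) : a *: b = a * (b : F).
Proof. by []. Qed.

Definition fvec (X : finType) : lmodType F := {ffun X -> F^o}.

Section FunctionSpace.
Context {X Y : finType}.

Definition bvec (x : X) : fvec X := [ffun y => (y == x)%:R].
Definition linext (g : X -> fvec Y) (u : fvec X) : fvec Y := \sum_x u x *: g x.

Lemma sum_bvecE (a : X -> F) x : (\sum_y a y *: bvec y) x = a x.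
Proof.
rewrite sum_ffunE (bigD1 x) //= big1 => [|y /negbTE ny].
  by rewrite !ffunE scale_regular eqxx mulr1 addr0.
by rewrite !ffunE scale_regular eq_sym ny mulr0.
Qed.

Lemma fvec_expand (u : fvec X) : u = \sum_x u x *: bvec x.
Proof. by apply/ffunP => x; rewrite sum_bvecE. Qed.

Lemma linext_bvec g x : linext g (bvec x) = g x.
Proof.
rewrite /linext (bigD1 x) //= big1 => [|y ny]; first by rewrite ffunE eqxx scale1r addr0.
by rewrite ffunE (negbTE ny) scale0r.
Qed.

Lemma linext_linear g : linear (linext g).
Proof.
move=> a u v; rewrite /linext scaler_sumr -big_split; apply: eq_bigr => x _.
by rewrite !ffunE !scale_regular scalerDl scalerA.
Qed.

Definition obvec (o : option X) : fvec X := if o is Some x then bvec x else 0.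

Lemma linext_obvec g o : linext g (obvec o) = oapp g 0 o.
Proof. by case: o => [x|] /=; [exact: linext_bvec | exact: linear_fun0 (linext_linear g)]. Qed.

Lemma linear_fvec_expand {f : fvec X -> fvec Y} :
  linear f -> forall u, f u = \sum_x u x *: f (bvec x).
Proof. by move=> Lf u; rewrite {1}(fvec_expand u) linear_fun_sumZ. Qed.

End FunctionSpace.

Section BasisMap.
Context {X X' : finType} (sg : X' -> X).

Definition vmap : fvec X' -> fvec X := linext (fun x' => bvec (sg x')).

HB.instance Definition _ :=
  GRing.isLinear.Build F (fvec X') (fvec X) *:%R vmap (linext_linear _).

Lemma vmap_linear : linear vmap.
Proof. exact: linext_linear. Qed.

Lemma vmap_bvec x' : vmap (bvec x') = bvec (sg x').
Proof. exact: linext_bvec. Qed.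

Lemma vmap_intertw {T : fvec X -> fvec X} {T' : fvec X' -> fvec X'} :
  linear T -> linear T' -> (forall x', T (bvec (sg x')) = vmap (T' (bvec x'))) ->
  forall v, T (vmap v) = vmap (T' v).
Proof.
move=> LT LT' Tsg v; rewrite [in RHS](linear_fvec_expand LT' v) linear_sum.
by rewrite linear_fun_sumZ //; apply: eq_bigr => x' _; rewrite Tsg linearZ.
Qed.

Lemma vmap_obvec o : vmap (obvec o) = obvec (omap sg o).
Proof. by rewrite /vmap linext_obvec; case: o. Qed.

Hypothesis sg_inj : injective sg.

Lemma vmapE v x' : vmap v (sg x') = v x'.
Proof.
rewrite sum_ffunE (bigD1 x') //= big1 => [|y ny].
  by rewrite !ffunE scale_regular eqxx mulr1 addr0.
by rewrite !ffunE scale_regular (inj_eq sg_inj) eq_sym (negbTE ny) mulr0.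
Qed.

Lemma vmap_inj : injective vmap.
Proof. by move=> u v E; apply/ffunP => x; rewrite -!vmapE E. Qed.

Lemma vmap_out v x : (forall x', sg x' != x) -> vmap v x = 0.
Proof.
move=> notsg; rewrite sum_ffunE big1 // => y _.
by rewrite !ffunE scale_regular eq_sym (negbTE (notsg y)) mulr0.
Qed.

End BasisMap.

(** * Truncation as the image of a basis embedding *)

Lemma q_neq0 : q != 0.
Proof. by rewrite tofrac_eq0 polyX_eq0. Qed.

Lemma qj_neq0 eps j : qj eps j != 0.
Proof. by rewrite /qj; case: ifP => _; rewrite ?oppr_eq0 ?invr_eq0 q_neq0. Qed.

Lemma q_expr_eq1 n : q ^+ n = 1 -> n = 0%N.
Proof.
rewrite /q -tofracXn -tofrac1 => /eqP; rewrite tofrac_eq => /eqP qn1.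
by have := size_polyXn rat n; rewrite qn1 size_poly1 => -[].
Qed.

Lemma qj_expr_eq1 eps j n : qj eps j ^+ n = 1 -> n = 0%N.
Proof.
rewrite /qj; case: ifP => _ qjn1; last exact: q_expr_eq1.
have : ((- q^-1) ^+ n) ^+ 2 = 1 by rewrite qjn1 expr1n.
rewrite -exprM mulnC exprM sqrrN -exprM exprVn => /eqP; rewrite invr_eq1.
by move=> /eqP/q_expr_eq1/eqP; rewrite muln_eq0 => /eqP.
Qed.

Definition is_hom (k' : nat) {T' T : lmodType F} (g : T' -> T) (A' : act T') (B : act T) :=
  (forall l, (1 <= l <= k')%N -> forall v, g (om A' l v) = om B l (g v)) /\
  (forall j, (1 <= j <= k'.-1)%N -> forall v,
     g (ea A' j v) = ea B j (g v) /\ g (fa A' j v) = fa B j (g v)).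

Lemma iso_to_stable k' {T' T : lmodType F} (A' : act T') (A : act T) P :
  iso_to k' A' A P -> stable k' A P.
Proof.
move=> [g [_ [g_in [g_onto [g_om g_ef]]]]] u /g_onto [v <-].
split=> [l l_k|j j_k]; first by rewrite -g_om.
by have [<- <-] := g_ef j j_k v.
Qed.

Section Truncation.
Context {X X' : finType} {sg : X' -> X} {eps : seq bool} {i : nat}
  {A : act (fvec X)} {wt : nat -> X -> nat}.
Hypothesis sg_inj : injective sg.
Hypothesis i_range : (1 <= i <= size eps)%N.
Hypothesis om_linear : forall j, linear (om A j).
Hypothesis om_bvec : forall j x, om A j (bvec x) = qj eps j ^+ wt j x *: bvec x.
Hypothesis wt_sg : forall x', wt i (sg x') = 0%N.
Hypothesis wt_image : forall x, wt i x = 0%N -> exists x', sg x' = x.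

Lemma inTr_vmap v : inTr eps i A (vmap sg v).
Proof.
exists #|X'|, (fun t => [ffun m : 'I_(size eps) => (wt m.+1 (sg (enum_val t)))%:Z]),
  (fun t => v (enum_val t) *: bvec (sg (enum_val t))); split; last first.
  by rewrite -(big_enum_val (A := predT) (fun x' => v x' *: bvec (sg x'))).
move=> t; split=> [m|m mi]; last by rewrite ffunE mi wt_sg.
by rewrite linear_funZ // om_bvec ffunE scalerA mulrC -scalerA -exprnP.
Qed.

Lemma om_fixed_vanish (w : fvec X) x : om A i w = w -> wt i x != 0%N -> w x = 0.
Proof.
move=> /(congr1 (fun u : fvec X => u x)); rewrite (linear_fvec_expand (om_linear i)).
under eq_bigr => y _ do rewrite om_bvec scalerA.
rewrite sum_bvecE => /eqP; rewrite -subr_eq0 -{2}(mulr1 (w x)) -mulrBr mulf_eq0 subr_eq0.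
by case/orP => [/eqP //|/eqP/qj_expr_eq1 ->].
Qed.

Lemma inTr_vmapP u : inTr eps i A u -> exists v, vmap sg v = u.
Proof.
move=> [N [mu [w [w_wt ->]]]]; exists [ffun x' => (\sum_t w t) (sg x')].
apply/ffunP => x; case: (pickP (fun x' => sg x' == x)) => [x' /eqP <-| notsg].
  by rewrite vmapE // ffunE.
have wt_x : wt i x != 0%N.
  by apply/eqP => /wt_image [x' sgx]; move: (notsg x'); rewrite sgx eqxx.
rewrite vmap_out => [|x']; last by rewrite notsg.
rewrite sum_ffunE big1 // => t _; have [w_t mu_i] := w_wt t.
apply: om_fixed_vanish wt_x.
have i1 : (i.-1 < size eps)%N by case/andP: i_range => i1 i2; rewrite prednK.
have Ei : (Ordinal i1).+1 = i by rewrite /= prednK //; case/andP: i_range.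
by have := w_t (Ordinal i1); rewrite Ei mu_i // expr0z scale1r.
Qed.

Lemma iso_to_vmap {k'} {A' : act (fvec X')} {B : act (fvec X)} :
  is_hom k' (vmap sg) A' B -> iso_to k' A' B (inTr eps i A).
Proof.
move=> [hom_om hom_ef]; exists (vmap sg).
by do !split => //; [exact: vmap_inj | exact: inTr_vmap | exact: inTr_vmapP].
Qed.

End Truncation.

(** * Removing position i *)

Lemma nth_take_drop_bump {T : Type} (x0 : T) (s : seq T) h p :
  nth x0 (take h s ++ drop h.+1 s) p = nth x0 s (bump h p).
Proof.
have [h_s|s_h] := ltnP h (size s); last first.
  rewrite take_oversize // drop_oversize ?cats0; last exact: leqW.
  by rewrite /bump; case: leqP => // h_p; rewrite nth_default ?nth_default //; lia.
rewrite nth_cat size_takel; last exact: ltnW.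
case: ltnP => p_h; first by rewrite nth_take // /bump leqNgt p_h.
by rewrite nth_drop /bump p_h; congr nth; lia.
Qed.

Section Skip.
Context {eps : seq bool} {i : nat}.
Hypothesis i_range : (1 <= i <= size eps)%N.
Local Notation eps' := (take i.-1 eps ++ drop i eps).

Lemma size_eps' : size eps' = (size eps).-1.
Proof. by rewrite size_cat size_take size_drop; case: ifP; lia. Qed.

Lemma i_pred_lt : (i.-1 < size eps)%N.
Proof. by lia. Qed.

Definition skip (a : 'I_(size eps')) : 'I_(size eps) :=
  lift (Ordinal i_pred_lt) (cast_ord size_eps' a).

Ltac index_arith :=
  rewrite ?/skip ?val_insubd /= ?val_insubd /bump;
  repeat match goal with
  | |- context [if ?c then _ else _] => case: (boolP c)
  end; lia.

Lemma skipE a : skip a = bump i.-1 a :> nat.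
Proof. by []. Qed.

Lemma skip_inj : injective skip.
Proof. by move=> a b /lift_inj/cast_ord_inj. Qed.

Lemma skip_neq a : (skip a).+1 != i.
Proof. by rewrite skipE; index_arith. Qed.

Lemma skip_onto (m : 'I_(size eps)) : m.+1 != i -> exists a, skip a = m.
Proof.
move=> mi; case: (unliftP (Ordinal i_pred_lt) m) => [j ->|/(congr1 val)/= m_i].
  by exists (cast_ord (esym size_eps') j); rewrite /skip cast_ordKV.
by move: mi; rewrite m_i; lia.
Qed.

Lemma qj_skip l : (0 < l)%N -> qj eps' l = qj eps (bump i l).
Proof.
move=> l_gt0; rewrite /qj -[in drop i eps](prednK (_ : 0 < i)%N) ?nth_take_drop_bump; last by lia.
by congr (if nth _ _ _ then _ else _); index_arith.
Qed.

Lemma skipS a : (skip a).+1 = bump i a.+1.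
Proof. by rewrite skipE; index_arith. Qed.

Lemma omega1_skip l a : omega1 eps' l a = omega1 eps (bump i l) (skip a).
Proof.
rewrite /omega1 skipS (inj_eq (can_inj (bumpK i))).
by case: eqP => // <-; apply: qj_skip.
Qed.

Lemma k1_skip j a : j.+1 != i -> k1 eps' j a = k1 eps (bump i j) (skip a).
Proof. by move=> ji; rewrite /k1 !omega1_skip; congr (_ / omega1 _ _ _); index_arith. Qed.

Lemma e1_skip j a : j.+1 != i -> e1 eps (bump i j) (skip a) = omap skip (e1 eps' j a).
Proof.
move=> ji; rewrite /e1 skipE.
have -> : (bump i j == (bump i.-1 a).+1 - 1)%N = (j == a.+1 - 1)%N by apply/eqP/eqP; index_arith.
by case: eqP => // ja; congr Some; apply/val_inj; index_arith.
Qed.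

(* [ordsucc] saturates at the last index, hence the bound on [j]. *)
Lemma f1_skip j a : j.+1 != i -> (j < size eps')%N ->
  f1 eps (bump i j) (skip a) = omap skip (f1 eps' j a).
Proof.
move=> ji j_lt; rewrite /f1 skipE.
have -> : (bump i j == (bump i.-1 a).+1) = (j == a.+1) by apply/eqP/eqP; index_arith.
case: eqP => // ja; congr Some; apply/val_inj.
by move: (ltn_ord a) size_eps'; index_arith.
Qed.

Section Middle.
Hypothesis i_mid : (2 <= i <= (size eps).-1)%N.

Lemma e1_pred_skip_none a : e1 eps i.-1 (skip a) = None.
Proof. by rewrite /e1 skipE ifF //; apply/eqP; index_arith. Qed.

Lemma f1_skip_none a : f1 eps i (skip a) = None.
Proof. by rewrite /f1 skipE ifF //; apply/eqP; index_arith. Qed.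

Lemma e1_skip_mid a :
  obind (e1 eps i.-1) (e1 eps i (skip a)) = omap skip (e1 eps' i.-1 a).
Proof.
case: (eqVneq (a : nat) i.-1) => a_i.
  have -> : e1 eps i (skip a) = Some (ordpred (skip a)) by rewrite /e1 ifT //; index_arith.
  have -> : e1 eps' i.-1 a = Some (ordpred a) by rewrite /e1 ifT //; index_arith.
  by rewrite /= /e1 ifT; [congr Some; apply/val_inj|]; index_arith.
have -> : e1 eps i (skip a) = None by rewrite /e1 ifF //; apply/eqP; index_arith.
by rewrite /e1 ifF //; apply/eqP; index_arith.
Qed.

Lemma f1_skip_mid a :
  obind (f1 eps i) (f1 eps i.-1 (skip a)) = omap skip (f1 eps' i.-1 a).
Proof.
have := size_eps'; have := ltn_ord a; case: (eqVneq (a : nat) i.-2) => a_i a_lt s_eps'.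
  have -> : f1 eps i.-1 (skip a) = Some (ordsucc (skip a)) by rewrite /f1 ifT //; index_arith.
  have -> : f1 eps' i.-1 a = Some (ordsucc a) by rewrite /f1 ifT //; index_arith.
  by rewrite /= /f1 ifT; [congr Some; apply/val_inj|]; index_arith.
have -> : f1 eps i.-1 (skip a) = None by rewrite /f1 ifF //; apply/eqP; index_arith.
by rewrite /f1 ifF //; apply/eqP; index_arith.
Qed.

Lemma k1_skip_mid a : k1 eps' i.-1 a = k1 eps i (skip a) * k1 eps i.-1 (skip a).
Proof.
rewrite /k1 !omega1_skip.
have -> : bump i i.-1 = i.-1 by index_arith.
have -> : bump i i.-1.+1 = i.+1 by index_arith.
rewrite prednK; last by lia.
by rewrite [RHS]mulrC mulrA divfK // /omega1; case: ifP => _; rewrite ?qj_neq0 ?oner_eq0.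
Qed.

End Middle.
End Skip.

(** * The action through phi *)

Definition act_linear {T : lmodType F} (A : act T) :=
  forall j, [/\ linear (om A j), linear (ea A j) & linear (fa A j)].

Section PhiAction.
Context (eps : seq bool) (i : nat) {T : lmodType F} (A : act T).
Hypothesis i_range : (1 <= i <= size eps)%N.

Lemma phiact_om l : om (phiact eps i A) l = om A (bump i l).
Proof. by rewrite /= /bump; case: ltnP. Qed.

Lemma phiact_ef j : (1 <= j < (size eps).-1)%N -> j.+1 != i ->
  ea (phiact eps i A) j = ea A (bump i j) /\ fa (phiact eps i A) j = fa A (bump i j).
Proof.
move=> j_range ji; rewrite /= /bump.
by split; case: ifP => ?; repeat case: ifP => ?;
  solve [congr (ea A _); lia | congr (fa A _); lia | exfalso; lia].
Qed.

Lemma phiact_ef_mid : (2 <= i <= (size eps).-1)%N ->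
  ea (phiact eps i A) i.-1 =
    (fun u => ea A i.-1 (ea A i u) - Dcoef eps i *: ea A i (ea A i.-1 u)) /\
  fa (phiact eps i A) i.-1 =
    (fun u => fa A i (fa A i.-1 u) - (Dcoef eps i)^-1 *: fa A i.-1 (fa A i u)).
Proof.
move=> i_mid; have i_gt : (i.-1 <= i.-2)%N = false by lia.
by rewrite /= i_mid i_gt eqxx.
Qed.

End PhiAction.

Section PhiHom.
Context {X X' : finType} (sg : X' -> X) (eps : seq bool) (i : nat)
  (A : act (fvec X)) (A' : act (fvec X')).
Local Notation eps' := (take i.-1 eps ++ drop i eps).
Hypothesis i_range : (1 <= i <= size eps)%N.
Hypothesis A_lin : act_linear A.
Hypothesis A'_lin : act_linear A'.
Hypothesis om_skip :
  forall l x', om A (bump i l) (bvec (sg x')) = vmap sg (om A' l (bvec x')).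
Hypothesis ef_skip : forall j x', j.+1 != i -> (j < size eps')%N ->
  ea A (bump i j) (bvec (sg x')) = vmap sg (ea A' j (bvec x')) /\
  fa A (bump i j) (bvec (sg x')) = vmap sg (fa A' j (bvec x')).
(* [e_(i-1)] and [f_i] kill the truncation, so the [Dcoef] terms of phi vanish there. *)
Hypothesis ef_mid : (2 <= i <= (size eps).-1)%N -> forall x',
  [/\ ea A i.-1 (bvec (sg x')) = 0,
      ea A i.-1 (ea A i (bvec (sg x'))) = vmap sg (ea A' i.-1 (bvec x')),
      fa A i (bvec (sg x')) = 0
    & fa A i (fa A i.-1 (bvec (sg x'))) = vmap sg (fa A' i.-1 (bvec x'))].

Lemma phiact_hom : is_hom (size eps') (vmap sg) A' (phiact eps i A).
Proof.
have s_eps' := size_eps' i_range.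
split=> [l _ v|j j_range v].
  have [Lom _ _] := A_lin (bump i l); have [Lom' _ _] := A'_lin l.
  by rewrite phiact_om (vmap_intertw sg Lom Lom' (om_skip l)).
have [ji|ji] := eqVneq j.+1 i; last first.
  have j_lt : (1 <= j < (size eps).-1)%N by lia.
  have [-> ->] := phiact_ef eps i A i_range j j_lt ji.
  have [_ Le Lf] := A_lin (bump i j); have [_ Le' Lf'] := A'_lin j.
  have j_lt' : (j < size eps')%N by lia.
  by split; apply/esym/vmap_intertw => // x'; case: (ef_skip j x' ji j_lt').
have i_mid : (2 <= i <= (size eps).-1)%N by lia.
have -> : j = i.-1 by lia.
have [-> ->] := phiact_ef_mid eps i A i_range i_mid.
have [_ Le1 Lf1] := A_lin i.-1; have [_ Le Lf] := A_lin i; have [_ Le' Lf'] := A'_lin i.-1.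
split; symmetry.
  apply: (vmap_intertw sg (linear_subZ _ (linear_comp Le1 Le) (linear_comp Le Le1)) Le') => x' /=.
  by have [e0 ee _ _] := ef_mid i_mid x'; rewrite e0 (linear_fun0 Le) scaler0 subr0.
apply: (vmap_intertw sg (linear_subZ _ (linear_comp Lf Lf1) (linear_comp Lf1 Lf)) Lf') => x' /=.
by have [_ _ f0 ff] := ef_mid i_mid x'; rewrite f0 (linear_fun0 Lf1) scaler0 subr0.
Qed.

End PhiHom.

(** * The natural representation and its tensor powers *)

Lemma obvec_Some {X : finType} (x : X) : obvec (Some x) = bvec x.
Proof. by []. Qed.

Section NaturalRep.
Variable e : seq bool.

Lemma natrep_linear : act_linear (natrep e).
Proof. by move=> j; split; apply: linext_linear. Qed.

Lemma natrep_om_bvec j m : om (natrep e) j (bvec m) = omega1 e j m *: bvec m.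
Proof. exact: linext_bvec. Qed.

Lemma natrep_ea_obvec j o : ea (natrep e) j (obvec o) = obvec (obind (e1 e j) o).
Proof. by case: o => [m|] /=; [exact: linext_bvec | exact: linear_fun0 (linext_linear _)]. Qed.

Lemma natrep_fa_obvec j o : fa (natrep e) j (obvec o) = obvec (obind (f1 e j) o).
Proof. by case: o => [m|] /=; [exact: linext_bvec | exact: linear_fun0 (linext_linear _)]. Qed.

End NaturalRep.

Section NaturalRepTruncation.
Context {eps : seq bool} {i : nat}.
Hypothesis i_range : (1 <= i <= size eps)%N.
Local Notation eps' := (take i.-1 eps ++ drop i eps).
Local Notation skip := (skip i_range).

Lemma natrep_hom : is_hom (size eps') (vmap skip) (natrep eps') (phiact eps i (natrep eps)).
Proof.
apply: phiact_hom => //; try exact: natrep_linear.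
- by move=> l a; rewrite !natrep_om_bvec linearZ /= vmap_bvec omega1_skip.
- move=> j a ji j_lt; rewrite -!obvec_Some !natrep_ea_obvec !natrep_fa_obvec /=.
  by rewrite e1_skip // f1_skip // !vmap_obvec.
move=> i_mid a; rewrite -!obvec_Some !natrep_ea_obvec !natrep_fa_obvec /=.
by rewrite e1_pred_skip_none // f1_skip_none // e1_skip_mid // f1_skip_mid // !vmap_obvec.
Qed.

Lemma natrep_om_weight j (m : 'I_(size eps)) :
  om (natrep eps) j (bvec m) = qj eps j ^+ (m.+1 == j) *: bvec m.
Proof. by rewrite natrep_om_bvec /omega1; case: eqP. Qed.

Lemma natrep_trunc_iso :
  iso_to (size eps') (natrep eps') (phiact eps i (natrep eps)) (inTr eps i (natrep eps)).
Proof.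
apply: (iso_to_vmap (skip_inj i_range) i_range _ natrep_om_weight _ _ natrep_hom).
- by move=> j; case: (natrep_linear eps j).
- by move=> a; rewrite (negbTE (skip_neq i_range a)).
- by move=> m /eqP; rewrite eqb0 => /skip_onto; apply.
Qed.

End NaturalRepTruncation.

Section Update.
Context {k l : nat}.

Lemma upd_upd (K : tidx k l) p m m' : upd (upd K p m) p m' = upd K p m'.
Proof. by apply/ffunP => r; rewrite !ffunE; case: eqP. Qed.

Lemma upd_id (K : tidx k l) p m r : r != p -> upd K p m r = K r.
Proof. by move=> /negbTE rp; rewrite ffunE rp. Qed.

End Update.

Section TensorRep.
Variables (e : seq bool) (l : nat).
Local Notation k := (size e).

Lemma tensrep_linear : act_linear (tensrep e l).
Proof. by move=> j; split; apply: linext_linear. Qed.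

Definition tweight (j : nat) (K : tidx k l) : nat := #|[pred p | (K p).+1 == j]|.

Lemma tensrep_om_bvec j K :
  om (tensrep e l) j (bvec K) = (\prod_p omega1 e j (K p)) *: bvec K.
Proof. exact: linext_bvec. Qed.

Lemma tensrep_om_weight j K : om (tensrep e l) j (bvec K) = qj e j ^+ tweight j K *: bvec K.
Proof.
rewrite tensrep_om_bvec; congr (_ *: _).
rewrite /tweight -prodr_const [RHS]big_mkcond /=; apply: eq_bigr => p _.
by rewrite /omega1 inE; case: eqP.
Qed.

Lemma tensrep_ea_bvec j K : ea (tensrep e l) j (bvec K) =
  \sum_(p < l) (\prod_(r < l | (r < p)%N) k1 e j (K r))^-1 *:
    obvec (omap (upd K p) (e1 e j (K p))).
Proof. by rewrite -[LHS]/(linext _ _) linext_bvec; apply: eq_bigr => p _; case: (e1 _ _ _). Qed.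

Lemma tensrep_fa_bvec j K : fa (tensrep e l) j (bvec K) =
  \sum_(p < l) (\prod_(r < l | (p < r)%N) k1 e j (K r)) *:
    obvec (omap (upd K p) (f1 e j (K p))).
Proof. by rewrite -[LHS]/(linext _ _) linext_bvec; apply: eq_bigr => p _; case: (f1 _ _ _). Qed.

Section SingleFactor.
Variables (j : nat) (K : tidx k l) (p : 'I_l).

Lemma tensrep_ea_upd_obvec o : (forall r, r != p -> e1 e j (K r) = None) ->
  ea (tensrep e l) j (obvec (omap (upd K p) o)) =
  (\prod_(r < l | (r < p)%N) k1 e j (K r))^-1 *: obvec (omap (upd K p) (obind (e1 e j) o)).
Proof.
have [_ Le _] := tensrep_linear j.
move=> K_off; case: o => [m|]; last by rewrite (linear_fun0 Le) scaler0.
rewrite [omap _ (Some _)]/= [obind _ _]/= obvec_Some tensrep_ea_bvec (bigD1 p) //=.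
rewrite [X in _ + X]big1 ?addr0 => [|r rp]; last by rewrite upd_id ?K_off ?scaler0.
rewrite ffunE eqxx; congr (_^-1 *: _); last by case: (e1 e j m) => //= m'; rewrite upd_upd.
by apply: eq_bigr => r rp; rewrite upd_id // neq_ltn rp.
Qed.

Lemma tensrep_fa_upd_obvec o : (forall r, r != p -> f1 e j (K r) = None) ->
  fa (tensrep e l) j (obvec (omap (upd K p) o)) =
  (\prod_(r < l | (p < r)%N) k1 e j (K r)) *: obvec (omap (upd K p) (obind (f1 e j) o)).
Proof.
have [_ _ Lf] := tensrep_linear j.
move=> K_off; case: o => [m|]; last by rewrite (linear_fun0 Lf) scaler0.
rewrite [omap _ (Some _)]/= [obind _ _]/= obvec_Some tensrep_fa_bvec (bigD1 p) //=.
rewrite [X in _ + X]big1 ?addr0 => [|r rp]; last by rewrite upd_id ?K_off ?scaler0.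
rewrite ffunE eqxx; congr (_ *: _); last by case: (f1 e j m) => //= m'; rewrite upd_upd.
by apply: eq_bigr => r rp; rewrite upd_id // neq_ltn rp orbT.
Qed.

End SingleFactor.
End TensorRep.

Section TensorMap.
Context {k k' l : nat} (sg : 'I_k' -> 'I_k).

Definition tmap (J : tidx k' l) : tidx k l := [ffun p => sg (J p)].

Lemma tmapE J p : tmap J p = sg (J p).
Proof. exact: ffunE. Qed.

Lemma tmap_inj : injective sg -> injective tmap.
Proof.
move=> sg_inj J J' eqJ; apply/ffunP => p; apply: sg_inj.
by have := congr1 (fun K : tidx k l => K p) eqJ; rewrite !ffunE.
Qed.

Lemma upd_tmap J p m : upd (tmap J) p (sg m) = tmap (upd J p m).
Proof. by apply/ffunP => r; rewrite !ffunE; case: eqP. Qed.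

Lemma vmap_tmap_obvec J p o :
  vmap tmap (obvec (omap (upd J p) o)) = obvec (omap (upd (tmap J) p) (omap sg o)).
Proof. by rewrite vmap_obvec; case: o => //= m; rewrite upd_tmap. Qed.

End TensorMap.

Section TensorRepTruncation.
Context {eps : seq bool} {i : nat}.
Hypothesis i_range : (1 <= i <= size eps)%N.
Variable l : nat.
Local Notation eps' := (take i.-1 eps ++ drop i eps).
Local Notation tskip := (tmap (l := l) (skip i_range)).

Lemma tensrep_hom :
  is_hom (size eps') (vmap tskip) (tensrep eps' l) (phiact eps i (tensrep eps l)).
Proof.
apply: phiact_hom => //; try exact: tensrep_linear.
- move=> l0 J; rewrite !tensrep_om_bvec linearZ /= vmap_bvec; congr (_ *: _).
  by apply: eq_bigr => p _; rewrite tmapE omega1_skip.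
- move=> j J ji j_lt; split.
    rewrite tensrep_ea_bvec [in RHS]tensrep_ea_bvec (linear_fun_sumZ (vmap_linear _)).
    apply: eq_bigr => p _; rewrite vmap_tmap_obvec tmapE (e1_skip i_range _ _ ji).
    by congr (_^-1 *: _); apply: eq_bigr => r _; rewrite tmapE k1_skip.
  rewrite tensrep_fa_bvec [in RHS]tensrep_fa_bvec (linear_fun_sumZ (vmap_linear _)).
  apply: eq_bigr => p _; rewrite vmap_tmap_obvec tmapE (f1_skip i_range _ _ ji j_lt).
  by congr (_ *: _); apply: eq_bigr => r _; rewrite tmapE k1_skip.
move=> i_mid J.
have [_ Le1 Lf1] := tensrep_linear eps l i.-1; have [_ Le Lf] := tensrep_linear eps l i.
have e1_off r : e1 eps i.-1 (tskip J r) = None by rewrite tmapE (e1_pred_skip_none i_range i_mid).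
have f1_off r : f1 eps i (tskip J r) = None by rewrite tmapE (f1_skip_none i_range i_mid).
split.
- by rewrite tensrep_ea_bvec big1 // => p _; rewrite e1_off scaler0.
- rewrite tensrep_ea_bvec (linear_fun_sumZ Le1) [in RHS]tensrep_ea_bvec.
  rewrite (linear_fun_sumZ (vmap_linear _)); apply: eq_bigr => p _.
  rewrite tensrep_ea_upd_obvec; last by move=> r _; rewrite e1_off.
  rewrite tmapE (e1_skip_mid i_range i_mid) vmap_tmap_obvec scalerA -invfM -big_split.
  by congr (_^-1 *: _); apply: eq_bigr => r _; rewrite tmapE (k1_skip_mid i_range i_mid).
- by rewrite tensrep_fa_bvec big1 // => p _; rewrite f1_off scaler0.
rewrite tensrep_fa_bvec (linear_fun_sumZ Lf) [in RHS]tensrep_fa_bvec.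
rewrite (linear_fun_sumZ (vmap_linear _)); apply: eq_bigr => p _.
rewrite tensrep_fa_upd_obvec; last by move=> r _; rewrite f1_off.
rewrite tmapE (f1_skip_mid i_range i_mid) vmap_tmap_obvec scalerA -big_split.
by congr (_ *: _); apply: eq_bigr => r _; rewrite tmapE (k1_skip_mid i_range i_mid) mulrC.
Qed.

Lemma tensrep_trunc_iso : iso_to (size eps') (tensrep eps' l)
  (phiact eps i (tensrep eps l)) (inTr eps i (tensrep eps l)).
Proof.
have tskip_inj : injective tskip := tmap_inj _ (skip_inj i_range).
apply: (iso_to_vmap tskip_inj i_range _ (tensrep_om_weight eps l) _ _ tensrep_hom).
- by move=> j; case: (tensrep_linear eps l j).
- by move=> J; apply: eq_card0 => p; rewrite inE tmapE; apply/negbTE/skip_neq.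
move=> K /card0_eq K_i.
have /fin_all_exists [J JK] p : exists a, skip i_range a = K p.
  by apply: skip_onto; have := K_i p; rewrite inE => /negbT.
by exists [ffun p => J p]; apply/ffunP => p; rewrite tmapE ffunE JK.
Qed.

End TensorRepTruncation.

Theorem lemma4p4 (eps : seq bool) (i : nat) :
  let n := size eps in
  let eps' := take i.-1 eps ++ drop i eps in
  (4 <= n)%N -> (1 <= i <= n)%N ->
  (n = 4%N -> constant eps') ->
  (* (1) *)
  (stable (size eps') (phiact eps i (natrep eps)) (inTr eps i (natrep eps)) /\
   iso_to (size eps') (natrep eps') (phiact eps i (natrep eps)) (inTr eps i (natrep eps))) /\
  (* (2) *)
  (forall l : nat, (1 <= l)%N ->
     iso_to (size eps') (tensrep eps' l) (phiact eps i (tensrep eps l))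
            (inTr eps i (tensrep eps l))).
Proof.
(* The Serre relations are not part of the encoded action. *)
move=> n eps' _ i_range _.
have iso_nat := natrep_trunc_iso i_range.
split; first by split; [exact: iso_to_stable iso_nat | exact: iso_nat].
by move=> l _; exact: tensrep_trunc_iso.
Qed.
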